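(* In the Cucker–Smale setting below, for all $i,j=1,\dots,N$, every unit vector $v\in\mathbb{R}^d$ and every $n\in\mathbb{N}_0$, $$\langle v_i(t)-v_j(t),v\rangle\le e^{-\tilde K(t-\bar t)}\langle v_i(\bar t)-v_j(\bar t),v\rangle+\big(1-e^{-\tilde K(t-\bar t)}\big)d_V(t_{2n})$$ for all $t_{2n+1}>t\ge\bar t\ge t_{2n}$.
   Context: Setting: $N\ge2$; $\tilde\psi:\mathbb{R}\to\mathbb{R}$ positive, bounded, continuous, with $\tilde K:=\|\tilde\psi\|_\infty$ and $\int_0^\infty\min_{r\in[0,x]}\tilde\psi(r)dx=+\infty$; $\{t_n\}_{n\in\mathbb{N}_0}$ increasing, nonnegative, $t_0=0$, $t_n\to\infty$, with $t_{2n+2}-t_{2n+1}<\frac{\ln2}{\tilde K}$ and $t_{2n+1}-t_{2n}>\frac1{\tilde K}$ for all $n$, and $\sum_{p\ge0}\ln\frac{e^{\tilde K(t_{2p+2}-t_{2p+1})}}{2-e^{\tilde K(t_{2p+2}-t_{2p+1})}}<\infty$. $\alpha(0)=1$, $\alpha=1$ on $(t_{2n},t_{2n+1})$, $\alpha=-1$ on $[t_{2n+1},t_{2n+2}]$. $\{(x_i,v_i)\}$ solves $x_i'=v_i$, $v_i'(t)=\frac1{N-1}\sum_{j\ne i}\alpha(t)\tilde\psi(|x_i(t)-x_j(t)|)(v_j(t)-v_i(t))$, $t>0$, with given initial data in $\mathbb{R}^d$ (continuous, $C^1$ on each $(t_n,t_{n+1})$). $d_V(t):=\max_{i,j}|v_i(t)-v_j(t)|$.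 *)

From Stdlib Require Import Reals Lra.
From Coquelicot Require Import Coquelicot.
Open Scope R_scope.

Fixpoint sumR (n : nat) (f : nat -> R) : R :=
  match n with O => 0 | S m => sumR m f + f m end.

(* maxR n f = max (0, f 0, ..., f (n-1)); used only for nonnegative f *)
Fixpoint maxR (n : nat) (f : nat -> R) : R :=
  match n with O => 0 | S m => Rmax (maxR m f) (f m) end.

(* Vectors of R^d are represented as u : nat -> R (components k < d). *)
Definition dot (d : nat) (u w : nat -> R) : R := sumR d (fun k => u k * w k).
Definition enorm (d : nat) (u : nat -> R) : R := sqrt (dot d u u).

Definition sup_norm (psi : R -> R) : R :=
  real (Lub_Rbar (fun y => exists r, y = Rabs (psi r))).

Definition min_on (psi : R -> R) (x : R) : R :=
  real (Glb_Rbar (fun y => exists r, 0 <= r <= x /\ y = psi r)).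

(* d_V(t) = max_{i,j} |v_i(t) - v_j(t)|, v : agent -> component -> time -> R *)
Definition dV (N d : nat) (v : nat -> nat -> R -> R) (s : R) : R :=
  maxR N (fun i => maxR N (fun j => enorm d (fun k => v i k s - v j k s))).

From Stdlib Require Import Reals Lra Lia Classical.
From Coquelicot Require Import Coquelicot.
Open Scope R_scope.

(* On [t_{2n}, t_{2n+1}) we have alpha = 1, so the projections u_k = <v_k, e>
   solve u_k' = 1/(N-1) sum_j c_kj (u_j - u_k) with weights 0 <= c_kj <= K.
   By the maximum principle every u_k stays in the interval [m, M] spanned by
   the values u_k(t_{2n}), and M - m <= d_V(t_{2n}). Hence
   (u_i - u_j)' <= K (M - u_i) - K (m - u_j) <= - K (u_i - u_j) + K d_V(t_{2n}),
   and Gronwall's comparison lemma gives the estimate. *)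

Lemma sumR_ext n f g : (forall i, (i < n)%nat -> f i = g i) -> sumR n f = sumR n g.
Proof. induction n; simpl; intros H; auto. rewrite IHn, H; auto. Qed.

Lemma sumR_plus n f g : sumR n (fun i => f i + g i) = sumR n f + sumR n g.
Proof. induction n; simpl; [ring | rewrite IHn; ring]. Qed.

Lemma sumR_scal n c f : sumR n (fun i => c * f i) = c * sumR n f.
Proof. induction n; simpl; [ring | rewrite IHn; ring]. Qed.

Lemma sumR_minus n f g : sumR n (fun i => f i - g i) = sumR n f - sumR n g.
Proof. induction n; simpl; [ring | rewrite IHn; ring]. Qed.

Lemma sumR_zero n : sumR n (fun _ => 0) = 0.
Proof. induction n; simpl; [ring | rewrite IHn; ring]. Qed.

Lemma sumR_swap n m (f : nat -> nat -> R) :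
  sumR n (fun i => sumR m (fun j => f i j)) = sumR m (fun j => sumR n (fun i => f i j)).
Proof.
  induction n; simpl.
  - rewrite sumR_zero; ring.
  - rewrite IHn, <- sumR_plus. reflexivity.
Qed.

Lemma sumR_le n f g : (forall i, (i < n)%nat -> f i <= g i) -> sumR n f <= sumR n g.
Proof. induction n; simpl; intros H; [lra |]. apply Rplus_le_compat; auto. Qed.

Lemma sumR_sq_ge0 n f : 0 <= sumR n (fun i => f i * f i).
Proof. induction n; simpl; [lra |]. pose proof (Rle_0_sqr (f n)). unfold Rsqr in *; lra. Qed.

Lemma sumR_skip_const_out n k C : (n <= k)%nat ->
  sumR n (fun j => if Nat.eq_dec j k then 0 else C) = INR n * C.
Proof.
  induction n; cbn [sumR]; intros H; [simpl; ring |].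
  rewrite IHn by lia. destruct (Nat.eq_dec n k); [lia |]. rewrite S_INR; ring.
Qed.

Lemma sumR_skip_const n k C : (k < n)%nat ->
  sumR n (fun j => if Nat.eq_dec j k then 0 else C) = (INR n - 1) * C.
Proof.
  induction n; cbn [sumR]; intros H; [lia |].
  destruct (Nat.eq_dec n k).
  - subst. rewrite sumR_skip_const_out by lia. rewrite S_INR; ring.
  - rewrite IHn by lia. rewrite S_INR; ring.
Qed.

Lemma maxR_ge n f k : (k < n)%nat -> f k <= maxR n f.
Proof.
  induction n; simpl; intros H; [lia |].
  destruct (Nat.eq_dec k n) as [-> | Hkn]; [apply Rmax_r |].
  eapply Rle_trans; [apply IHn; lia | apply Rmax_l].
Qed.

Lemma exists_argmax n (f : nat -> R) : (0 < n)%nat ->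
  exists p, (p < n)%nat /\ forall k, (k < n)%nat -> f k <= f p.
Proof.
  induction n as [| n IHn]; intros Hn; [lia |].
  destruct (Nat.eq_dec n 0) as [-> | Hn0].
  - exists 0%nat. split; [lia |]. intros k Hk. replace k with 0%nat by lia. lra.
  - destruct IHn as [p [Hp Hmax]]; [lia |].
    destruct (Rle_lt_dec (f n) (f p)).
    + exists p. split; [lia |]. intros k Hk.
      destruct (Nat.eq_dec k n) as [-> | Hkn]; [lra | apply Hmax; lia].
    + exists n. split; [lia |]. intros k Hk.
      destruct (Nat.eq_dec k n) as [-> | Hkn]; [lra |].
      specialize (Hmax k ltac:(lia)). lra.
Qed.

Lemma dot_minus_l d u w e : dot d (fun k => u k - w k) e = dot d u e - dot d w e.
Proof. unfold dot. rewrite <- sumR_minus. apply sumR_ext. intros; ring. Qed.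

Lemma dot_le_enorm d w e : enorm d e = 1 -> dot d w e <= enorm d w.
Proof.
  intros He. unfold enorm, dot in *.
  assert (Hee : sumR d (fun k => e k * e k) = 1).
  { rewrite <- (sqrt_sqrt (sumR d _)) by apply sumR_sq_ge0. rewrite He; ring. }
  set (l := sumR d (fun k => w k * e k)).
  (* expand 0 <= |w - l e|^2 = |w|^2 - l^2 *)
  pose proof (sumR_sq_ge0 d (fun k => w k - l * e k)) as H.
  rewrite (sumR_ext d _
      (fun k => w k * w k + ((-2 * l) * (w k * e k) + (l * l) * (e k * e k)))) in H
    by (intros; ring).
  rewrite !sumR_plus, !sumR_scal, Hee in H. fold l in H.
  apply Rle_trans with (Rabs l); [apply Rle_abs |].
  rewrite <- sqrt_Rsqr_abs. apply sqrt_le_1_alt. unfold Rsqr; lra.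
Qed.

Lemma dot_le_dV N d (v : nat -> nat -> R -> R) e s p q :
  enorm d e = 1 -> (p < N)%nat -> (q < N)%nat ->
  dot d (fun k => v p k s - v q k s) e <= dV N d v s.
Proof.
  intros He Hp Hq. eapply Rle_trans; [apply dot_le_enorm, He |].
  unfold dV. eapply Rle_trans; [| apply (maxR_ge N _ p Hp)].
  apply (maxR_ge N (fun j => enorm d (fun k => v p k s - v j k s)) q Hq).
Qed.

Lemma filterlim_eventually_lt {T} (F : (T -> Prop) -> Prop) {FF : Filter F}
  (f : T -> R) (l c : R) :
  filterlim f F (locally l) -> l < c -> F (fun x => f x < c).
Proof.
  intros H Hl. apply filterlim_locally with (eps := mkposreal (c - l) ltac:(lra)) in H.
  eapply filter_imp; [| exact H]. intros x Hx.
  change (Rabs (f x - l) < c - l) in Hx. apply Rabs_def2 in Hx. lra.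
Qed.

Lemma filterlim_eventually_gt {T} (F : (T -> Prop) -> Prop) {FF : Filter F}
  (f : T -> R) (l c : R) :
  filterlim f F (locally l) -> c < l -> F (fun x => c < f x).
Proof.
  intros H Hl. apply filterlim_locally with (eps := mkposreal (l - c) ltac:(lra)) in H.
  eapply filter_imp; [| exact H]. intros x Hx.
  change (Rabs (f x - l) < l - c) in Hx. apply Rabs_def2 in Hx. lra.
Qed.

Lemma filter_forall_lt {T} (F : (T -> Prop) -> Prop) {FF : Filter F} N (P : nat -> T -> Prop) :
  (forall k, (k < N)%nat -> F (P k)) -> F (fun x => forall k, (k < N)%nat -> P k x).
Proof.
  induction N; intros H.
  - apply filter_forall. intros; lia.
  - eapply filter_imp;
      [| apply filter_and; [apply IHN; intros; apply H; lia | apply (H N); lia]].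
    intros x [H1 H2] k Hk. destruct (Nat.eq_dec k N) as [-> | HkN]; auto. apply H1; lia.
Qed.

Lemma filterlim_Rplus {T} (F : (T -> Prop) -> Prop) {FF : Filter F} (f g : T -> R) (a b : R) :
  filterlim f F (locally a) -> filterlim g F (locally b) ->
  filterlim (fun x => f x + g x) F (locally (a + b)).
Proof.
  intros. eapply filterlim_comp_2; eauto. apply (@filterlim_plus R_AbsRing R_NormedModule).
Qed.

Lemma filterlim_Rmult {T} (F : (T -> Prop) -> Prop) {FF : Filter F} (f g : T -> R) (a b : R) :
  filterlim f F (locally a) -> filterlim g F (locally b) ->
  filterlim (fun x => f x * g x) F (locally (a * b)).
Proof. intros. eapply filterlim_comp_2; eauto. apply (@filterlim_mult R_AbsRing). Qed.

Lemma filterlim_Ropp {T} (F : (T -> Prop) -> Prop) {FF : Filter F} (f : T -> R) (a : R) :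
  filterlim f F (locally a) -> filterlim (fun x => - f x) F (locally (- a)).
Proof.
  intros Hf. apply (filterlim_ext (fun x => (-1) * f x) (fun x => - f x)); [intros; ring |].
  replace (- a) with ((-1) * a) by ring. apply (filterlim_Rmult F); auto.
  apply filterlim_const.
Qed.

Lemma filterlim_Rminus {T} (F : (T -> Prop) -> Prop) {FF : Filter F} (f g : T -> R) (a b : R) :
  filterlim f F (locally a) -> filterlim g F (locally b) ->
  filterlim (fun x => f x - g x) F (locally (a - b)).
Proof. intros Hf Hg. apply (filterlim_Rplus F); auto. apply (filterlim_Ropp F); auto. Qed.

Lemma filterlim_sumR {T} (F : (T -> Prop) -> Prop) {FF : Filter F} n (f : nat -> T -> R) a :
  (forall i, (i < n)%nat -> filterlim (f i) F (locally (a i))) ->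
  filterlim (fun x => sumR n (fun i => f i x)) F (locally (sumR n a)).
Proof.
  induction n; simpl; intros H; [apply filterlim_const |].
  apply filterlim_Rplus; auto.
Qed.

Lemma continuous_at_right (f : R -> R) (x : R) :
  continuous f x -> filterlim f (at_right x) (locally (f x)).
Proof. intros H P HP. destruct (H P HP) as [d Hd]. exists d. intros; apply Hd; auto. Qed.

Lemma is_derive_sumR n (f df : nat -> R -> R) s :
  (forall i, (i < n)%nat -> is_derive (f i) s (df i s)) ->
  is_derive (fun x => sumR n (fun i => f i x)) s (sumR n (fun i => df i s)).
Proof.
  induction n; simpl; intros H; [apply (is_derive_const (V := R_NormedModule)) |].
  apply (is_derive_plus (K := R_AbsRing) (V := R_NormedModule)); auto.
Qed.

Lemma locally_exists_left (P : R -> Prop) a tau :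
  locally tau P -> a < tau -> exists s, a <= s < tau /\ P s.
Proof.
  intros [del Hdel] Ha. pose proof (cond_pos del).
  assert (Hm : 0 < Rmin del (tau - a) <= Rmin del (tau - a)) by (split; [apply Rmin_pos |]; lra).
  pose proof (Rmin_l del (tau - a)). pose proof (Rmin_r del (tau - a)).
  exists (tau - Rmin del (tau - a) / 2). split; [lra |]. apply Hdel.
  change (Rabs (tau - Rmin del (tau - a) / 2 - tau) < del). rewrite Rabs_left; lra.
Qed.

Lemma is_derive_neg_locally_left (g : R -> R) tau l :
  is_derive g tau l -> l < 0 -> locally tau (fun s => s < tau -> g tau < g s).
Proof.
  intros Hd Hl. apply is_derive_Reals in Hd.
  destruct (Hd (- l / 2) ltac:(lra)) as [del Hdel].
  exists del. intros s Hs Hst. change R in s. change (Rabs (s - tau) < del) in Hs.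
  specialize (Hdel (s - tau) ltac:(lra) ltac:(rewrite Rabs_left in *; lra)).
  replace (tau + (s - tau)) with s in Hdel by ring.
  apply Rabs_def2 in Hdel. destruct Hdel as [Hq _].
  set (q := (g s - g tau) / (s - tau)) in *.
  assert (g s - g tau = q * (s - tau)) by (unfold q; field; lra).
  assert (q < 0) by lra. nra.
Qed.

(** * Maximum principle *)

Lemma first_hitting_time (P : R -> Prop) a t1 : a <= t1 -> P t1 ->
  exists tau, a <= tau <= t1 /\ (forall s, a <= s < tau -> ~ P s) /\
    (forall del, 0 < del -> exists s, tau <= s < tau + del /\ a <= s <= t1 /\ P s).
Proof.
  intros Hat HP.
  (* tau is the infimum of the hitting set, computed as - sup of its reflection *)
  set (E := fun y => a <= - y <= t1 /\ P (- y)).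
  assert (HE : E (- t1)) by (unfold E; rewrite Ropp_involutive; split; [lra | auto]).
  assert (Hb : bound E) by (exists (- a); intros y [[H1 H2] _]; lra).
  destruct (completeness E Hb (ex_intro _ _ HE)) as [m [Hub Hlub]].
  pose proof (Hub _ HE).
  exists (- m). split; [split |split].
  - apply Ropp_le_cancel. rewrite Ropp_involutive. apply Hlub. intros y [[H1 H2] _]. lra.
  - lra.
  - intros s Hs Ps. assert (- s <= m).
    { apply Hub. unfold E; rewrite Ropp_involutive; split; [lra | auto]. }
    lra.
  - intros del Hdel. apply NNPP; intro Hn.
    assert (Hub2 : is_upper_bound E (m - del)).
    { intros y Hy. apply Rnot_lt_le; intro Hlt. apply Hn. exists (- y).
      pose proof (Hub y Hy). destruct Hy as [H1 H2]. split; [lra | split; auto]. }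
    specialize (Hlub _ Hub2). lra.
Qed.

Lemma first_nonneg_time N (G : nat -> R -> R) a t1 :
  (forall k, (k < N)%nat -> filterlim (G k) (at_right a) (locally (G k a))) ->
  (forall k, (k < N)%nat -> G k a < 0) ->
  (forall k s, (k < N)%nat -> a < s <= t1 -> continuous (G k) s) ->
  forall k1, (k1 < N)%nat -> a <= t1 -> 0 <= G k1 t1 ->
  exists tau, a < tau <= t1 /\
    (forall j s, (j < N)%nat -> a <= s < tau -> G j s < 0) /\
    (forall j, (j < N)%nat -> G j tau <= 0) /\
    exists k, (k < N)%nat /\ 0 <= G k tau.
Proof.
  intros Hright Hneg Hcont k1 Hk1 Hat1 Ht1.
  destruct (first_hitting_time (fun s => exists k, (k < N)%nat /\ 0 <= G k s) a t1)
    as [tau [Htau [Hbefore Hafter]]]; [lra | eauto |].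
  assert (Hbefore' : forall j s, (j < N)%nat -> a <= s < tau -> G j s < 0).
  { intros j s Hj Hs. apply Rnot_le_lt. intro. apply (Hbefore s Hs). eauto. }
  assert (Ha : a < tau).
  { destruct (proj1 Htau) as [| <-]; [lra | exfalso].
    destruct (filter_forall_lt (at_right a) N (fun k s => G k s < 0)) as [del Hdel].
    { intros k Hk. apply (filterlim_eventually_lt (at_right a) _ _ _ (Hright k Hk) (Hneg k Hk)). }
    destruct (Hafter del (cond_pos del)) as [s [Hs [Hs' [k [Hk HG]]]]].
    destruct (proj1 Hs') as [Has | <-]; [| specialize (Hneg k Hk); lra].
    assert (Hb : ball a del s) by (change (Rabs (s - a) < del); rewrite Rabs_right; lra).
    specialize (Hdel s Hb Has k Hk). lra. }
  exists tau. split; [lra | split; [exact Hbefore' | split]].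
  - intros j Hj. apply Rnot_lt_le; intro Hpos.
    destruct (locally_exists_left _ a tau
      (filterlim_eventually_gt (locally tau) _ _ _ (Hcont j tau Hj ltac:(lra)) Hpos) Ha)
      as [s [Hs Hgt]].
    specialize (Hbefore' j s Hj Hs). lra.
  - apply NNPP; intro Hn.
    destruct (filter_forall_lt (locally tau) N (fun k s => G k s < 0)) as [del Hdel].
    { intros k Hk.
      apply (filterlim_eventually_lt (locally tau) _ _ _ (Hcont k tau Hk ltac:(lra))).
      apply Rnot_le_lt; intro; apply Hn; eauto. }
    destruct (Hafter del (cond_pos del)) as [s [Hs [_ [k [Hk HG]]]]].
    assert (Hb : ball tau del s) by (change (Rabs (s - tau) < del); rewrite Rabs_right; lra).
    specialize (Hdel s Hb k Hk). lra.
Qed.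

Lemma max_principle_strict N (G D : nat -> R -> R) a b :
  (forall k s, (k < N)%nat -> a < s < b -> is_derive (G k) s (D k s)) ->
  (forall k, (k < N)%nat -> filterlim (G k) (at_right a) (locally (G k a))) ->
  (forall k, (k < N)%nat -> G k a < 0) ->
  (forall k s, (k < N)%nat -> a < s < b ->
     (forall j, (j < N)%nat -> G j s <= G k s) -> D k s < 0) ->
  forall k t, (k < N)%nat -> a <= t < b -> G k t < 0.
Proof.
  intros Hd Hright Hneg HD k1 t1 Hk1 Ht1. apply Rnot_le_lt; intro Ht1'.
  destruct (first_nonneg_time N G a t1 Hright Hneg) with (k1 := k1)
    as [tau [Htau [Hbefore [Hle [k [Hk HGk]]]]]]; auto; [| lra |].
  { intros k s Hk Hs. apply (ex_derive_continuous (K := R_AbsRing) (V := R_NormedModule)).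
    eexists. apply Hd; auto; lra. }
  assert (HDk : D k tau < 0).
  { apply HD; auto; [lra |]. intros j Hj. specialize (Hle j Hj). lra. }
  destruct (locally_exists_left _ a tau
    (is_derive_neg_locally_left (G k) tau _ (Hd k tau Hk ltac:(lra)) HDk) (proj1 Htau))
    as [s [Hs Hgt]].
  specialize (Hgt (proj2 Hs)). specialize (Hbefore k s Hk Hs). lra.
Qed.

Lemma max_principle N (u D : nat -> R -> R) a b M :
  (forall k s, (k < N)%nat -> a < s < b -> is_derive (u k) s (D k s)) ->
  (forall k, (k < N)%nat -> filterlim (u k) (at_right a) (locally (u k a))) ->
  (forall k s, (k < N)%nat -> a < s < b ->
     (forall j, (j < N)%nat -> u j s <= u k s) -> D k s <= 0) ->
  (forall k, (k < N)%nat -> u k a <= M) ->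
  forall k t, (k < N)%nat -> a <= t < b -> u k t <= M.
Proof.
  intros Hd Hright HD Hinit k1 t1 Hk1 Ht1. apply Rnot_lt_le; intro Hgt.
  (* tilt the bound by a small slope eps to make the derivative condition strict *)
  set (eps := (u k1 t1 - M) / (2 * (1 + t1 - a))).
  assert (Heps : 0 < eps) by (apply Rdiv_lt_0_compat; lra).
  assert (Hlt : u k1 t1 - (M + eps * (1 + t1 - a)) < 0).
  { apply (max_principle_strict N (fun k s => u k s - (M + eps * (1 + s - a)))
             (fun k s => D k s - eps) a b); auto.
    - intros k s Hk Hs. apply (is_derive_minus (K := R_AbsRing) (V := R_NormedModule)).
      + apply Hd; auto.
      + auto_derive; auto. ring.
    - intros k Hk.
      apply (filterlim_Rminus (at_right a) (u k) (fun s => M + eps * (1 + s - a))); [auto |].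
      apply (continuous_at_right (fun s => M + eps * (1 + s - a))).
      apply (ex_derive_continuous (K := R_AbsRing) (V := R_NormedModule)).
      auto_derive; auto.
    - intros k Hk. specialize (Hinit k Hk). nra.
    - intros k s Hk Hs Hmax.
      enough (D k s <= 0) by lra. apply HD; auto.
      intros j Hj. specialize (Hmax j Hj). lra. }
  replace (eps * (1 + t1 - a)) with ((u k1 t1 - M) / 2) in Hlt by (unfold eps; field; lra).
  lra.
Qed.

Lemma le_start_of_derive_nonpos (f df : R -> R) a b :
  (forall s, a < s < b -> is_derive f s (df s)) ->
  (forall s, a < s < b -> df s <= 0) ->
  filterlim f (at_right a) (locally (f a)) ->
  forall t, a <= t < b -> f t <= f a.
Proof.
  intros Hd Hneg Hright t Ht.
  apply (max_principle 1 (fun _ => f) (fun _ => df) a b (f a)) with (k := O);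
    auto; intros; lra.
Qed.

Lemma linear_differential_inequality (w dw : R -> R) K D a b :
  (forall s, a < s < b -> is_derive w s (dw s)) ->
  (forall s, a < s < b -> dw s <= K * (D - w s)) ->
  filterlim w (at_right a) (locally (w a)) ->
  forall t, a <= t < b ->
    w t <= exp (- K * (t - a)) * w a + (1 - exp (- K * (t - a))) * D.
Proof.
  intros Hd Hdw Hright t Ht.
  set (f := fun s => exp (K * (s - a)) * (w s - D)).
  assert (Hf : f t <= f a).
  { apply (le_start_of_derive_nonpos f
      (fun s => exp (K * (s - a)) * (K * (w s - D) + dw s)) a b); auto.
    - intros s Hs.
      assert (Hexp : is_derive (fun s => exp (K * (s - a))) s (K * exp (K * (s - a))))
        by (auto_derive; [auto | rewrite Rmult_1_r; reflexivity]).
      assert (Hw : is_derive (fun s => w s - D) s (dw s - 0)).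
      { apply (is_derive_minus (K := R_AbsRing) (V := R_NormedModule)); [auto |].
        apply (is_derive_const (K := R_AbsRing) (V := R_NormedModule)). }
      pose proof (is_derive_mult (K := R_AbsRing) _ _ s _ _ Hexp Hw Rmult_comm) as Hf.
      replace (exp (K * (s - a)) * (K * (w s - D) + dw s))
        with (K * exp (K * (s - a)) * (w s - D) + exp (K * (s - a)) * (dw s - 0)) by ring.
      exact Hf.
    - intros s Hs. specialize (Hdw s Hs). pose proof (exp_pos (K * (s - a))). nra.
    - apply (filterlim_Rmult (at_right a) (fun s => exp (K * (s - a))) (fun s => w s - D)).
      + apply (continuous_at_right (fun s => exp (K * (s - a)))).
        apply (ex_derive_continuous (K := R_AbsRing) (V := R_NormedModule)).
        auto_derive; auto.
      + apply (filterlim_Rminus (at_right a) w (fun _ => D)); [auto | apply filterlim_const]. }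
  unfold f in Hf. rewrite Rminus_diag, Rmult_0_r, exp_0, Rmult_1_l in Hf.
  assert (Hinv : exp (- K * (t - a)) * exp (K * (t - a)) = 1).
  { rewrite <- exp_plus. replace (- K * (t - a) + K * (t - a)) with 0 by ring. apply exp_0. }
  pose proof (exp_pos (- K * (t - a))).
  apply Rmult_le_compat_l with (r := exp (- K * (t - a))) in Hf; [| lra].
  rewrite <- Rmult_assoc, Hinv, Rmult_1_l in Hf. nra.
Qed.

(** * Projected Cucker-Smale dynamics *)

Definition cs_rhs N (u : nat -> R -> R) (c : nat -> nat -> R -> R) k s :=
  / (INR N - 1) * sumR N (fun j => c k j s * (u j s - u k s)).

Lemma cs_rhs_opp N u c k s :
  cs_rhs N (fun k s => - u k s) c k s = - cs_rhs N u c k s.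
Proof.
  unfold cs_rhs.
  rewrite (sumR_ext N _ (fun j => -1 * (c k j s * (u j s - u k s)))) by (intros; ring).
  rewrite sumR_scal. ring.
Qed.

Lemma cs_rhs_le_of_max N K u c k s M : (2 <= N)%nat -> (k < N)%nat ->
  (forall j, 0 <= c k j s <= K) -> c k k s = 0 ->
  (forall j, (j < N)%nat -> u j s <= M) -> cs_rhs N u c k s <= K * (M - u k s).
Proof.
  intros HN Hk Hc Hcc HM.
  assert (HN1 : 1 < INR N) by (apply (le_INR 2) in HN; simpl in HN; lra).
  assert (Hsum : sumR N (fun j => c k j s * (u j s - u k s)) <=
                 sumR N (fun j => if Nat.eq_dec j k then 0 else K * (M - u k s))).
  { apply sumR_le. intros j Hj. destruct (Nat.eq_dec j k) as [-> | _].
    - rewrite Hcc. lra.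
    - pose proof (Hc j). pose proof (HM j Hj). pose proof (HM k Hk). nra. }
  rewrite sumR_skip_const in Hsum by auto. unfold cs_rhs.
  apply Rle_trans with (/ (INR N - 1) * ((INR N - 1) * (K * (M - u k s)))).
  - apply Rmult_le_compat_l; auto. left; apply Rinv_0_lt_compat; lra.
  - right; field; lra.
Qed.

Lemma cs_rhs_ge_of_min N K u c k s m : (2 <= N)%nat -> (k < N)%nat ->
  (forall j, 0 <= c k j s <= K) -> c k k s = 0 ->
  (forall j, (j < N)%nat -> m <= u j s) -> K * (m - u k s) <= cs_rhs N u c k s.
Proof.
  intros HN Hk Hc Hcc Hm.
  pose proof (cs_rhs_le_of_max N K (fun k s => - u k s) c k s (- m) HN Hk Hc Hcc) as H.
  rewrite cs_rhs_opp in H.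
  enough (- cs_rhs N u c k s <= K * (- m - - u k s)) by lra.
  apply H. intros j Hj. specialize (Hm j Hj). lra.
Qed.

Section ProjectedDynamics.

Variables (N : nat) (K a b : R) (u : nat -> R -> R) (c : nat -> nat -> R -> R).
Hypothesis HN : (2 <= N)%nat.
Hypothesis Hderive :
  forall k s, (k < N)%nat -> a < s < b -> is_derive (u k) s (cs_rhs N u c k s).
Hypothesis Hweight : forall k j s, a < s < b -> 0 <= c k j s <= K.
Hypothesis Hdiag : forall k s, c k k s = 0.
Hypothesis Hright :
  forall k t, (k < N)%nat -> a <= t < b -> filterlim (u k) (at_right t) (locally (u k t)).

Lemma cs_le_initial_max M : (forall k, (k < N)%nat -> u k a <= M) ->
  forall k t, (k < N)%nat -> a <= t < b -> u k t <= M.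
Proof.
  intros HM k t Hk Ht. apply (max_principle N u (cs_rhs N u c) a b M); auto.
  - intros j Hj. apply Hright; auto; lra.
  - intros j s Hj Hs Hmax.
    pose proof (cs_rhs_le_of_max N K u c j s (u j s) HN Hj (fun i => Hweight j i s Hs)
                  (Hdiag j s) Hmax). lra.
Qed.

Lemma cs_ge_initial_min m : (forall k, (k < N)%nat -> m <= u k a) ->
  forall k t, (k < N)%nat -> a <= t < b -> m <= u k t.
Proof.
  intros Hm k t Hk Ht.
  enough (- u k t <= - m) by lra.
  apply (max_principle N (fun k s => - u k s) (fun k s => - cs_rhs N u c k s) a b (- m));
    auto.
  - intros j s Hj Hs. apply (is_derive_opp (K := R_AbsRing) (V := R_NormedModule)). auto.
  - intros j Hj. apply (filterlim_Ropp (at_right a)). apply Hright; auto; lra.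
  - intros j s Hj Hs Hmin.
    pose proof (cs_rhs_ge_of_min N K u c j s (u j s) HN Hj (fun i => Hweight j i s Hs)
                  (Hdiag j s)) as H.
    enough (K * (u j s - u j s) <= cs_rhs N u c j s) by lra.
    apply H. intros i Hi. specialize (Hmin i Hi). lra.
  - intros j Hj. specialize (Hm j Hj). lra.
Qed.

Lemma cs_difference_bound Dv :
  (forall p q, (p < N)%nat -> (q < N)%nat -> u p a - u q a <= Dv) ->
  forall i j tb s, (i < N)%nat -> (j < N)%nat -> a <= tb -> tb <= s < b ->
    u i s - u j s
    <= exp (- K * (s - tb)) * (u i tb - u j tb) + (1 - exp (- K * (s - tb))) * Dv.
Proof.
  intros HDv i j tb s Hi Hj Htb Hs.
  assert (HN0 : (0 < N)%nat) by lia.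
  destruct (exists_argmax N (fun k => u k a) HN0) as [p [Hp Hmax]].
  destruct (exists_argmax N (fun k => - u k a) HN0) as [q [Hq Hmin]].
  pose proof (HDv p q Hp Hq) as Hspread.
  apply (linear_differential_inequality (fun s => u i s - u j s)
           (fun s => cs_rhs N u c i s - cs_rhs N u c j s) K Dv tb b); [| | | lra].
  - intros r Hr. apply (is_derive_minus (K := R_AbsRing) (V := R_NormedModule));
      apply Hderive; auto; lra.
  - intros r Hr.
    assert (HrI : a < r < b) by lra.
    assert (HK : 0 <= K) by (destruct (Hweight i i r HrI); lra).
    assert (Hup : forall k, (k < N)%nat -> u k r <= u p a).
    { intros k Hk. apply (cs_le_initial_max (u p a)); auto; lra. }
    assert (Hlow : forall k, (k < N)%nat -> u q a <= u k r).
    { intros k Hk. apply cs_ge_initial_min; auto; [| lra].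
      intros l Hl. specialize (Hmin l Hl). lra. }
    pose proof (cs_rhs_le_of_max N K u c i r (u p a) HN Hi
                  (fun l => Hweight i l r HrI) (Hdiag i r) Hup).
    pose proof (cs_rhs_ge_of_min N K u c j r (u q a) HN Hj
                  (fun l => Hweight j l r HrI) (Hdiag j r) Hlow).
    nra.
  - apply (filterlim_Rminus (at_right tb)); apply Hright; auto; lra.
Qed.

End ProjectedDynamics.
Lemma is_derive_dot_cs_rhs N d (v : nat -> nat -> R -> R) (c : nat -> nat -> R -> R) e k (s : R) :
  (forall l, (l < d)%nat -> is_derive (v k l) s
     (/ (INR N - 1) * sumR N (fun j => c k j s * (v j l s - v k l s)))) ->
  is_derive (fun s => dot d (fun l => v k l s) e) s
    (cs_rhs N (fun k s => dot d (fun l => v k l s) e) c k s).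
Proof.
  intros Hv.
  replace (cs_rhs N (fun k s => dot d (fun l => v k l s) e) c k s)
    with (sumR d (fun l =>
            / (INR N - 1) * sumR N (fun j => c k j s * (v j l s - v k l s)) * e l)).
  - apply (is_derive_sumR d (fun l s => v k l s * e l) (fun l s =>
      / (INR N - 1) * sumR N (fun j => c k j s * (v j l s - v k l s)) * e l)).
    intros l Hl.
    exact (is_derive_scal_l (K := R_AbsRing) (V := R_NormedModule) _ _ _ _ (Hv l Hl)).
  - unfold cs_rhs, dot.
    rewrite (sumR_ext d _ (fun l => / (INR N - 1) *
               sumR N (fun j => c k j s * ((v j l s - v k l s) * e l)))).
    + rewrite sumR_scal, sumR_swap. f_equal. apply sumR_ext. intros j _.
      rewrite sumR_scal, <- sumR_minus. f_equal. apply sumR_ext. intros; ring.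
    + intros l _.
      rewrite (sumR_ext N (fun j => c k j s * ((v j l s - v k l s) * e l))
                 (fun j => e l * (c k j s * (v j l s - v k l s)))) by (intros; ring).
      rewrite sumR_scal. ring.
Qed.

Lemma Rabs_le_sup_norm (psi : R -> R) :
  (exists B, forall r, Rabs (psi r) <= B) -> forall r, Rabs (psi r) <= sup_norm psi.
Proof.
  intros [B HB] r. unfold sup_norm.
  set (E := fun y => exists r, y = Rabs (psi r)).
  destruct (Lub_Rbar_correct E) as [Hub Hlub].
  assert (Hfin : Rbar_le (Lub_Rbar E) B) by (apply Hlub; intros y [r' ->]; apply HB).
  assert (Hge : Rbar_le (Rabs (psi r)) (Lub_Rbar E)) by (apply Hub; exists r; auto).
  destruct (Lub_Rbar E); simpl in *; tauto.
Qed.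

Theorem proposition7p9
  (N d : nat) (psi : R -> R) (t : nat -> R) (alpha : R -> R)
  (x v : nat -> nat -> R -> R) :
  (2 <= N)%nat ->
  (* psi positive, bounded, continuous *)
  (forall r, 0 < psi r) ->
  (exists B, forall r, Rabs (psi r) <= B) ->
  (forall r, continuous psi r) ->
  (* int_0^oo min_{[0,x]} psi dx = +oo *)
  is_lim (fun X => RInt (min_on psi) 0 X) p_infty p_infty ->
  (* switching times *)
  t 0%nat = 0 ->
  (forall n, t n < t (S n)) ->
  (forall n, 0 <= t n) ->
  is_lim_seq t p_infty ->
  (forall n, t (2 * n + 2)%nat - t (2 * n + 1)%nat < ln 2 / sup_norm psi) ->
  (forall n, t (2 * n + 1)%nat - t (2 * n)%nat > 1 / sup_norm psi) ->
  ex_series (fun p =>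
    ln (exp (sup_norm psi * (t (2 * p + 2)%nat - t (2 * p + 1)%nat))
        / (2 - exp (sup_norm psi * (t (2 * p + 2)%nat - t (2 * p + 1)%nat))))) ->
  (* alpha *)
  alpha 0 = 1 ->
  (forall n s, t (2 * n)%nat < s < t (2 * n + 1)%nat -> alpha s = 1) ->
  (forall n s, t (2 * n + 1)%nat <= s <= t (2 * n + 2)%nat -> alpha s = -1) ->
  (* the solution: continuous on [0, oo) *)
  (forall i k s, 0 < s -> continuous (x i k) s /\ continuous (v i k) s) ->
  (forall i k, filterlim (x i k) (at_right 0) (locally (x i k 0)) /\
               filterlim (v i k) (at_right 0) (locally (v i k 0))) ->
  (* Cucker-Smale system on each (t_n, t_{n+1}) *)
  (forall n s, t n < s < t (S n) -> forall i k, (i < N)%nat -> (k < d)%nat ->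
     is_derive (x i k) s (v i k s) /\
     is_derive (v i k) s
       (/ (INR N - 1) *
        sumR N (fun j => if Nat.eq_dec j i then 0 else
          alpha s * psi (enorm d (fun l => x i l s - x j l s))
            * (v j k s - v i k s)))) ->
  forall i j, (i < N)%nat -> (j < N)%nat ->
  forall e : nat -> R, enorm d e = 1 ->
  forall n tb s, t (2 * n)%nat <= tb -> tb <= s -> s < t (2 * n + 1)%nat ->
    dot d (fun k => v i k s - v j k s) e
    <= exp (- sup_norm psi * (s - tb)) * dot d (fun k => v i k tb - v j k tb) e
       + (1 - exp (- sup_norm psi * (s - tb))) * dV N d v (t (2 * n)%nat).
Proof.
  intros HN Hpos HB _ _ _ _ Hnn _ _ _ _ _ Hcoupled _ Hcont Hcont0 Hsys
    i j Hi Hj e He n tb s Htb Hs Hsb.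
  set (c := fun k j r => if Nat.eq_dec j k then 0
                         else alpha r * psi (enorm d (fun l => x k l r - x j l r))).
  rewrite (dot_minus_l d (fun l => v i l s)), (dot_minus_l d (fun l => v i l tb)).
  apply (cs_difference_bound N (sup_norm psi) (t (2 * n)%nat) (t (2 * n + 1)%nat)
           (fun k r => dot d (fun l => v k l r) e) c); auto; try lra.
  - intros k r Hk Hr. apply is_derive_dot_cs_rhs. intros l Hl.
    assert (Hr' : t (2 * n)%nat < r < t (S (2 * n))) by (rewrite Nat.add_1_r in Hr; exact Hr).
    destruct (Hsys _ r Hr' k l Hk Hl) as [_ Hv].
    erewrite sumR_ext; [exact Hv |]. intros j' _. unfold c. destruct Nat.eq_dec; ring.
  - intros k j' r Hr. unfold c. destruct Nat.eq_dec; [| rewrite (Hcoupled n r Hr), Rmult_1_l].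
    + pose proof (Rabs_le_sup_norm psi HB 0). pose proof (Rabs_pos (psi 0)). lra.
    + split; [left; apply Hpos |]. eapply Rle_trans; [apply Rle_abs | apply Rabs_le_sup_norm, HB].
  - intros k r. unfold c. destruct Nat.eq_dec; congruence.
  - intros k r Hk Hr. unfold dot.
    apply (filterlim_sumR (at_right r) d (fun l r => v k l r * e l)). intros l Hl.
    apply (filterlim_Rmult (at_right r)); [| apply filterlim_const].
    destruct (Rle_lt_or_eq_dec 0 r) as [Hr0 | <-]; [pose proof (Hnn (2 * n)%nat); lra | |].
    + apply continuous_at_right, (Hcont k l r Hr0).
    + apply (Hcont0 k l).
  - intros p q Hp Hq. rewrite <- dot_minus_l. apply dot_le_dV; auto.
Qed.
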